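(* Let $X$ be a reflexive Banach space, let $R:X\to X$ be a bounded linear isomorphism of $X$ onto $X$, and let $L:X\times X^*\to\mathbb{R}\cup\{+\infty\}$ be convex, lower semicontinuous and not identically $+\infty$. Assume $L$ is partially $R$-antiselfdual, i.e. $L^*(0,x)=L(-Rx,0)$ for all $x\in X$, and that for some $x_0\in X$ the function $p\mapsto L(x_0,p)$ is bounded above on a neighborhood of the origin in $X^*$. Then there exists $\bar x\in X$ such that $$L(-R\bar x,0)=\inf_{x\in X}L(x,0)=0\qquad\text{and}\qquad (0,\bar x)\in\partial L(-R\bar x,0).$$
   Context: For a function $L$ on $X\times X^*$, its Legendre–Fenchel transform (in both variables) is $L^*(q,y)=\sup\{\langle q,x\rangle+\langle y,p\rangle-L(x,p):x\in X,\ p\in X^*\}$ for $(q,y)\in X^*\times X$ (with $X^{**}=X$). $\partial L$ denotes the convex subdifferential of $L$ on $X\times X^*$, with values in $X^*\times X$. *)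

From HB Require Import structures.
From mathcomp Require Import all_boot all_order all_algebra.
From mathcomp Require Import all_classical all_reals all_analysis.
Set Implicit Arguments. Unset Strict Implicit. Unset Printing Implicit Defensive.
Import Order.TTheory GRing.Theory Num.Theory.
Import numFieldNormedType.Exports.
Local Open Scope classical_set_scope.
Local Open Scope ring_scope.

Section Defs.
Variables (R : realType) (X : normedModType R).

(* Elements of the dual X^*: continuous linear functionals X -> R. *)
Definition is_dual (p : X -> R) : Prop :=
  (forall (a : R) (x y : X), p (a *: x + y) = a * p x + p y) /\ continuous p.

Definition dnorm (p : X -> R) : R := sup [set `|p x| | x in [set x : X | `|x| <= 1]].

Definition bidual_elem (phi : (X -> R) -> R) : Prop :=
  (forall (a : R) (p q : X -> R), is_dual p -> is_dual q ->
      phi (fun x => a * p x + q x) = a * phi p + phi q) /\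
  exists C : R, forall p, is_dual p -> `|phi p| <= C * dnorm p.

Definition reflexive_space : Prop :=
  forall phi, bidual_elem phi -> exists x : X, forall p, is_dual p -> phi p = p x.

Definition lin_iso (T : X -> X) : Prop :=
  (forall (a : R) (x y : X), T (a *: x + y) = a *: T x + T y) /\ continuous T /\
  exists S : X -> X, continuous S /\ cancel T S /\ cancel S T.

Local Open Scope ereal_scope.

(* L : X x X^* -> R u {+oo} *)
Definition no_minfty (L : X -> (X -> R) -> \bar R) : Prop :=
  forall x p, is_dual p -> L x p != -oo.

Definition proper_fun (L : X -> (X -> R) -> \bar R) : Prop :=
  exists x p, is_dual p /\ L x p != +oo.

Definition convex_fun (L : X -> (X -> R) -> \bar R) : Prop :=
  forall (l : R) (a b : X) (p q : X -> R), (0 <= l <= 1)%R -> is_dual p -> is_dual q ->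
    L (l *: a + (1 - l) *: b)%R (fun x => l * p x + (1 - l) * q x)%R
      <= l%:E * L a p + (1 - l)%:E * L b q.

Definition lsc_fun (L : X -> (X -> R) -> \bar R) : Prop :=
  forall a p (t : R), is_dual p -> t%:E < L a p ->
    exists2 d : R, (0 < d)%R & forall b q, is_dual q ->
      (`|b - a|%R < d)%R -> (dnorm (fun x => q x - p x) < d)%R -> t%:E < L b q.

(* Legendre-Fenchel transform, with X^** identified with X *)
Definition LF (L : X -> (X -> R) -> \bar R) (q : X -> R) (y : X) : \bar R :=
  ereal_sup [set (q a + p y)%:E - L a p | a in [set: X] & p in is_dual].

Definition subdiff (L : X -> (X -> R) -> \bar R) (a : X) (p : X -> R)
    (q : X -> R) (y : X) : Prop :=
  L a p \is a fin_num /\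
  forall b r, is_dual r -> L a p + (q (b - a) + (r y - p y))%:E <= L b r.

End Defs.

(* Since R is onto, partial antiselfduality
   gives L(b, 0) = L^*(0, y) >= -L(b, 0) for a suitable y, so L(., 0) >= 0;
   let c be its infimum. By convexity the positively homogeneous hull
   q(p) = inf_{t > 0, a} (L(a, t p) - c) / t is sublinear on X^*, and the
   local bound at x0 makes it at most a multiple of the dual norm. A linear
   functional below q (Hahn-Banach, via a minimal sublinear functional below q
   given by Zorn's lemma) is then bounded, hence evaluation at some xbar by
   reflexivity, and <p, xbar> <= L(a, p) - c for all (a, p). Taking the
   supremum, L(-R xbar, 0) = L^*(0, xbar) <= -c <= 0 <= L(-R xbar, 0), so
   c = 0 and the same inequality is the subgradient inequality. *)
From HB Require Import structures.
From mathcomp Require Import all_boot all_order all_algebra.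
From mathcomp Require Import all_classical all_reals all_analysis.
From mathcomp Require Import ring lra.
Set Implicit Arguments. Unset Strict Implicit. Unset Printing Implicit Defensive.
Import Order.TTheory GRing.Theory Num.Theory.
Import numFieldNormedType.Exports.
Local Open Scope classical_set_scope.
Local Open Scope ring_scope.

Lemma le_inf_add (R : realType) (A B : set R) (m : R) : A !=set0 -> B !=set0 ->
  (forall y z, A y -> B z -> m <= y + z) -> m <= inf A + inf B.
Proof.
move=> A0 B0 hm.
suff : m - inf A <= inf B by lra.
apply: lb_le_inf => // z Bz.
suff : m - z <= inf A by lra.
by apply: lb_le_inf => // y Ay; have := hm y z Ay Bz; lra.
Qed.

Section HahnBanach.
Variables (R : realType) (V : lmodType R) (D : set V).
Hypothesis D0 : D 0.
Hypothesis D_comb : forall (a : R) u v, D u -> D v -> D (a *: u + v).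

Lemma DN u : D u -> D (- u).
Proof. by move=> Du; have := D_comb (-1) Du D0; rewrite addr0 scaleN1r. Qed.

Lemma DD u v : D u -> D v -> D (u + v).
Proof. by move=> Du Dv; have := D_comb 1 Du Dv; rewrite scale1r. Qed.

Lemma DZ (a : R) u : D u -> D (a *: u).
Proof. by move=> Du; have := D_comb a Du D0; rewrite addr0. Qed.

Definition sublinear (s : V -> R) :=
  (forall u v, D u -> D v -> s (u + v) <= s u + s v) /\
  (forall (a : R) u, 0 < a -> D u -> s (a *: u) = a * s u).

Definition le_on (s s' : V -> R) := forall u, D u -> s u <= s' u.

Lemma sublinear0 s : sublinear s -> s 0 = 0.
Proof. by move=> [_ hs]; have := hs 2 0 (ltr0Sn _ 1) D0; rewrite scaler0; lra. Qed.

Lemma sublinearZ s (a : R) u : sublinear s -> 0 <= a -> D u -> s (a *: u) = a * s u.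
Proof.
move=> hs; rewrite le0r => /orP[/eqP ->|a0] Du; last exact: hs.2.
by rewrite scale0r mul0r sublinear0.
Qed.

Lemma sublinear_addN_ge0 s u : sublinear s -> D u -> 0 <= s u + s (- u).
Proof. by move=> hs Du; rewrite -(sublinear0 hs) -(subrr u); apply: hs.1 => //; exact: DN. Qed.

Section ShiftInf.
Variables (s : V -> R) (p : V).
Hypotheses (hs : sublinear s) (Dp : D p).

Definition shift_inf x := inf [set s (x + t *: p) - t * s p | t in [set t : R | 0 <= t]].

Let shift_set_lb x : D x ->
  lbound [set s (x + t *: p) - t * s p | t in [set t : R | 0 <= t]] (- s (- x)).
Proof.
move=> Dx _ [t /= t0 <-].
have : s (t *: p) <= s (x + t *: p) + s (- x).
  by rewrite -{1}(addKr x (t *: p)) addrC; apply: hs.1; [exact: DD (DZ t Dp)|exact: DN].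
by rewrite sublinearZ //; lra.
Qed.

Let shift_set_ne x : [set s (x + t *: p) - t * s p | t in [set t : R | 0 <= t]] !=set0.
Proof. by exists (s (x + 0 *: p) - 0 * s p); exists 0 => /=. Qed.

Lemma shift_inf_le_at x t : D x -> 0 <= t -> shift_inf x <= s (x + t *: p) - t * s p.
Proof. by move=> Dx t0; apply: ge_inf; [exists (- s (- x)); exact: shift_set_lb|exists t]. Qed.

Lemma shift_inf_le : le_on shift_inf s.
Proof.
by move=> x Dx; have := shift_inf_le_at Dx (lexx 0); rewrite scale0r addr0 mul0r subr0.
Qed.

Lemma shift_inf_opp : shift_inf (- p) <= - s p.
Proof.
have := shift_inf_le_at (DN Dp) ler01.
by rewrite scale1r addNr sublinear0 // mul1r sub0r.
Qed.

Lemma shift_inf_sublinear : sublinear shift_inf.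
Proof.
split.
- move=> u v Du Dv; apply: le_inf_add => // _ _ [t /= t0 <-] [w /= w0 <-].
  apply: le_trans (shift_inf_le_at (DD Du Dv) (addr_ge0 t0 w0)) _.
  have -> : u + v + (t + w) *: p = (u + t *: p) + (v + w *: p).
    by rewrite scalerDl addrACA.
  have := hs.1 _ _ (DD Du (DZ t Dp)) (DD Dv (DZ w Dp)).
  by rewrite mulrDl; lra.
- move=> a u a0 Du; have a0' := ltW a0.
  apply/eqP; rewrite eq_le; apply/andP; split.
  + rewrite -ler_pdivrMl //; apply: lb_le_inf => // _ [t /= t0 <-].
    rewrite ler_pdivrMl //.
    apply: le_trans (shift_inf_le_at (DZ a Du) (mulr_ge0 a0' t0)) _.
    rewrite -scalerA -scalerDr (sublinearZ hs a0'); last exact: DD (DZ t Dp).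
    by rewrite mulrBr mulrA.
  + apply: lb_le_inf => // _ [t /= t0 <-].
    have := ler_wpM2l a0' (shift_inf_le_at Du (divr_ge0 t0 a0')).
    have -> : a *: u + t *: p = a *: (u + (t / a) *: p).
      by rewrite scalerDr scalerA mulrCA mulfV ?gt_eqF // mulr1.
    rewrite (sublinearZ hs a0'); last exact: DD (DZ _ Dp).
    by rewrite mulrBr mulrA mulrCA mulfV ?gt_eqF // mulr1.
Qed.

End ShiftInf.

Lemma minimal_sublinear_odd s : sublinear s ->
  (forall s', sublinear s' -> le_on s' s -> le_on s s') ->
  forall p, D p -> s (- p) = - s p.
Proof.
move=> hs hmin p Dp.
have := hmin _ (shift_inf_sublinear hs Dp) (shift_inf_le hs Dp) _ (DN Dp).
move=> /le_trans/(_ (shift_inf_opp hs Dp)).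
by have := sublinear_addN_ge0 hs Dp; lra.
Qed.

Lemma odd_sublinear_linear s : sublinear s -> (forall p, D p -> s (- p) = - s p) ->
  forall (a : R) u v, D u -> D v -> s (a *: u + v) = a * s u + s v.
Proof.
move=> hs hN.
have sD u v : D u -> D v -> s (u + v) = s u + s v.
  move=> Du Dv; apply/eqP; rewrite eq_le hs.1 //=.
  have := hs.1 _ _ (DN Du) (DN Dv); rewrite -opprD !hN //; [lra|exact: DD].
move=> a u v Du Dv; rewrite sD //; last exact: DZ.
congr (_ + _); have [a0|a0] := leP 0 a; first exact: sublinearZ.
have -> : a *: u = - ((- a) *: u) by rewrite scaleNr opprK.
by rewrite hN ?(sublinearZ hs _ Du) ?mulNr ?opprK ?oppr_ge0 ?ltW //; apply: DZ.
Qed.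

Section ChainInf.
Variables (q : V -> R) (B : set (V -> R)).
Hypotheses (Bq : B q) (Bsub : forall s, B s -> sublinear s /\ le_on s q).
Hypothesis Btot : total_on B le_on.

Definition chain_inf u := inf [set s u | s in B].

Let chain_set_ne u : [set s u | s in B] !=set0.
Proof. by exists (q u), q. Qed.

Lemma chain_inf_le s : B s -> le_on chain_inf s.
Proof.
move=> Bs u Du; apply: ge_inf; last by exists s.
exists (- q (- u)) => _ [s' Bs' <-]; have [hs' s'q] := Bsub Bs'.
by have := sublinear_addN_ge0 hs' Du; have := s'q _ (DN Du); lra.
Qed.

Lemma chain_inf_sublinear : sublinear chain_inf.
Proof.
split.
- move=> u v Du Dv; apply: le_inf_add => // _ _ [s1 B1 <-] [s2 B2 <-].
  have [[hs1 _] [hs2 _]] := (Bsub B1, Bsub B2).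
  have [h|h] := Btot B1 B2.
  + apply: le_trans (chain_inf_le B1 (DD Du Dv)) _.
    by have := hs1.1 _ _ Du Dv; have := h v Dv; lra.
  + apply: le_trans (chain_inf_le B2 (DD Du Dv)) _.
    by have := hs2.1 _ _ Du Dv; have := h u Du; lra.
- move=> a u a0 Du.
  have sZ s : B s -> s (a *: u) = a * s u by move=> /Bsub[hs _]; exact: hs.2.
  apply/eqP; rewrite eq_le; apply/andP; split.
  + rewrite -ler_pdivrMl //; apply: lb_le_inf => // _ [s Bs <-].
    by rewrite ler_pdivrMl // -sZ //; exact: chain_inf_le (DZ a Du).
  + rewrite {2}/chain_inf; apply: lb_le_inf => // _ [s Bs <-].
    by rewrite sZ // ler_pM2l //; exact: chain_inf_le.
Qed.

End ChainInf.

Lemma hahn_banach (q : V -> R) : sublinear q ->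
  exists f : V -> R, (forall (a : R) u v, D u -> D v -> f (a *: u + v) = a * f u + f v)
    /\ le_on f q.
Proof.
move=> hq.
pose T := {s : V -> R | sublinear s /\ le_on s q}.
pose t0 : T := exist _ q (conj hq (fun u _ => lexx (q u))).
(* Reverse pointwise order: a premaximal element is a minimal sublinear s <= q. *)
pose Rle (s t : T) : bool := `[< le_on (sval t) (sval s) >].
have t0_le (s : T) : le_on (sval s) q := (svalP s).2.
have [[f [hf fq]] fmax] : exists t, premaximal Rle t.
  apply: (ZL_preorder t0).
  - by move=> t; apply/asboolP.
  - move=> r s t /asboolP h1 /asboolP h2; apply/asboolP => u Du.
    exact: le_trans (h2 _ Du) (h1 _ Du).
  move=> A Atot.
  pose B := sval @` (A `|` [set t0]).
  have Bsub s : B s -> sublinear s /\ le_on s q by move=> [[s' hs'] _ <-].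
  have Btot : total_on B le_on.
    move=> _ _ [s1 [A1|->] <-] [s2 [A2|->] <-]; last 3 first.
    - by left; exact: t0_le.
    - by right; exact: t0_le.
    - by left; exact: t0_le.
    by have [/asboolP|/asboolP] := Atot _ _ A1 A2; [right|left].
  have Bq : B q by exists t0 => //; right.
  pose hB := conj (chain_inf_sublinear Bq Bsub Btot) (chain_inf_le Bsub Bq).
  exists (exist _ (chain_inf B) hB) => s As; apply/asboolP.
  by apply: (chain_inf_le Bsub); exists s => //; left.
exists f; split => //; apply: odd_sublinear_linear => //.
apply: minimal_sublinear_odd => // s' hs' s'f.
have s'q : le_on s' q by move=> v Dv; exact: le_trans (s'f _ Dv) (fq _ Dv).
by move: (fmax (exist _ s' (conj hs' s'q)) (introT (asboolP _) s'f)) => /asboolP.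
Qed.

End HahnBanach.

Section Dual.
Variables (R : realType) (X : normedModType R).

Lemma is_dual0 : is_dual (0 : X -> R).
Proof.
split; first by move=> a x y /=; rewrite mulr0 addr0.
by move=> x; exact: cst_continuous.
Qed.

Lemma is_dual_comb (a : R) (p q : X -> R) : is_dual p -> is_dual q -> is_dual (a *: p + q).
Proof.
move=> [lp cp] [lq cq]; split.
  move=> b x y.
  change (a * p (b *: x + y) + q (b *: x + y) = b * (a * p x + q x) + (a * p y + q y)).
  by rewrite lp lq; ring.
move=> x; apply: continuousD; last exact: cq.
by apply: (@continuousM _ _ (fun=> a) p x); [exact: cst_continuous|exact: cp].
Qed.

Lemma is_dualZ (a : R) (p : X -> R) : is_dual p -> is_dual (a *: p).
Proof. by move=> hp; have := is_dual_comb a hp is_dual0; rewrite addr0. Qed.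

Lemma is_dualD (p q : X -> R) : is_dual p -> is_dual q -> is_dual (p + q).
Proof. by move=> hp hq; have := is_dual_comb 1 hp hq; rewrite scale1r. Qed.

Lemma is_dualN (p : X -> R) : is_dual p -> is_dual (- p).
Proof. by move=> hp; have := is_dualZ (-1) hp; rewrite scaleN1r. Qed.

Lemma dual0 (p : X -> R) : is_dual p -> p 0 = 0.
Proof. by move=> [lp _]; have := lp 1 0 0; rewrite scale1r addr0 mul1r; lra. Qed.

Lemma dualZ (p : X -> R) (a : R) x : is_dual p -> p (a *: x) = a * p x.
Proof. by move=> hp; have := hp.1 a x 0; rewrite addr0 dual0 // addr0. Qed.

Lemma dual_bounded (p : X -> R) : is_dual p ->
  exists2 B : R, 0 <= B & forall x : X, `|x| <= 1 -> `|p x| <= B.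
Proof.
move=> hp; have := cvgr_dist_lt _ _ (hp.2 0) _ ltr01.
rewrite dual0 // => /(_ _)/(@nbhs_norm0P _ X (fun t => `|0 - p t| < 1)).
move=> [/= d d0 hd]; exists (2 / d); first by rewrite divr_ge0 // ltW.
move=> x x1.
have hx : `|(d / 2) *: x| < d.
  rewrite normrZ gtr0_norm ?divr_gt0 //.
  have : d / 2 * `|x| <= d / 2 by apply: ler_piMr => //; rewrite divr_ge0 // ltW.
  lra.
have := hd _ hx; rewrite sub0r normrN dualZ // normrM gtr0_norm ?divr_gt0 //.
rewrite ler_pdivlMr // mulrC.
have : d / 2 * `|p x| * 2 = d * `|p x| by field.
lra.
Qed.

Lemma dnorm_ub (p : X -> R) x : is_dual p -> `|x| <= 1 -> `|p x| <= dnorm p.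
Proof.
move=> hp x1; have [B B0 hB] := dual_bounded hp.
apply: ub_le_sup; last by exists x.
by exists B => _ [y y1 <-]; exact: hB.
Qed.

Lemma dnorm_le (p : X -> R) (B : R) :
  (forall x : X, `|x| <= 1 -> `|p x| <= B) -> dnorm p <= B.
Proof.
move=> hB; apply: ge_sup; first by exists `|p 0|, 0 => //=; rewrite normr0.
by move=> _ [y y1 <-]; exact: hB.
Qed.

Lemma dnorm_ge0 (p : X -> R) : is_dual p -> 0 <= dnorm p.
Proof.
move=> hp; have h0 : `|(0 : X)| <= 1 by rewrite normr0.
exact: le_trans (normr_ge0 _) (dnorm_ub hp h0).
Qed.

Lemma dnorm0 : dnorm (0 : X -> R) = 0.
Proof.
apply/eqP; rewrite eq_le dnorm_ge0 ?andbT; last exact: is_dual0.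
by apply: dnorm_le => x _ /=; rewrite normr0.
Qed.

Lemma dnormZ (p : X -> R) (t : R) : is_dual p -> 0 <= t -> dnorm (t *: p) <= t * dnorm p.
Proof.
move=> hp t0; apply: dnorm_le => x x1 /=.
by rewrite normrM ger0_norm // ler_wpM2l // dnorm_ub.
Qed.

Lemma dnormN (p : X -> R) : is_dual p -> dnorm (- p) <= dnorm p.
Proof. by move=> hp; apply: dnorm_le => x x1 /=; rewrite normrN dnorm_ub. Qed.

End Dual.

Section PositiveHull.
Variables (R : realType) (X : normedModType R) (L : X -> (X -> R) -> \bar R).
Hypotheses (Lnm : no_minfty L) (Lconv : convex_fun L).
Variables (c M r : R) (x0 : X).
Hypothesis c_le : forall a, (c%:E <= L a (0 : X -> R)%R)%E.
Hypothesis r_gt0 : 0 < r.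
Hypothesis L_x0_le : forall p, is_dual p -> dnorm p < r -> (L x0 p <= M%:E)%E.

Definition hull_vals (p : X -> R) := [set y : R | exists t a, 0 < t /\
  L a (t *: p) \is a fin_num /\ y = (fine (L a (t *: p)) - c) / t].

Definition hull (p : X -> R) := inf (hull_vals p).

Let fin_le a (p : X -> R) (y : R) :
  is_dual p -> (L a p <= y%:E)%E -> L a p \is a fin_num.
Proof.
move=> hp hM; rewrite fin_numE Lnm //=.
by apply/eqP => h; rewrite h leye_eq in hM.
Qed.

(* Convexity of L between (a, t p) and (a', t' p') with weights t'/(t+t') and
   t/(t+t'). *)
Lemma hull_vals_add (t t' : R) a a' (p p' : X -> R) :
  0 < t -> 0 < t' -> is_dual p -> is_dual p' ->
  L a (t *: p) \is a fin_num -> L a' (t' *: p') \is a fin_num ->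
  exists2 z, hull_vals (p + p') z &
    z <= (fine (L a (t *: p)) - c) / t + (fine (L a' (t' *: p')) - c) / t'.
Proof.
move=> t0 t'0 hp hp' h1 h2.
pose l := t' / (t + t'); pose T := t * t' / (t + t').
have tt0 : 0 < t + t' by rewrite addr_gt0.
have T0 : 0 < T by rewrite /T divr_gt0 // mulr_gt0.
have hl : 0 <= l <= 1.
  by rewrite /l ler_pdivrMr // mul1r lerDr divr_ge0 // ltW.
have comb : (fun x => l * (t *: p) x + (1 - l) * (t' *: p') x) = T *: (p + p').
  apply/funext => x; rewrite /l /T /=.
  change (t' / (t + t') * (t * p x) + (1 - t' / (t + t')) * (t' * p' x) =
     t * t' / (t + t') * (p x + p' x)).
  by field; rewrite gt_eqF.
have := Lconv a a' hl (is_dualZ t hp) (is_dualZ t' hp'); rewrite comb.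
set Lc := L _ (T *: (p + p')).
rewrite -(fineK h1) -(fineK h2) -!EFinM -EFinD => hle.
have Lcfin : Lc \is a fin_num := fin_le (is_dualZ T (is_dualD hp hp')) hle.
exists ((fine Lc - c) / T); first by exists T, (l *: a + (1 - l) *: a').
move: hle; rewrite -(fineK Lcfin) lee_fin.
set fc := fine Lc; set f1 := fine (L a (t *: p)); set f2 := fine (L a' (t' *: p')).
move=> /(ler_wpM2l (ltW tt0)).
have -> : (t + t') * (l * f1 + (1 - l) * f2) = t' * f1 + t * f2.
  by rewrite /l; field; rewrite gt_eqF.
have -> : (fc - c) / T = (t + t') * (fc - c) / (t * t').
  by rewrite /T; field; rewrite !gt_eqF.
have -> : (f1 - c) / t + (f2 - c) / t' = (t' * (f1 - c) + t * (f2 - c)) / (t * t').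
  by field; rewrite !gt_eqF.
by rewrite ler_pM2r ?invr_gt0 ?mulr_gt0 //; lra.
Qed.

Lemma hull_vals0_ge0 y : hull_vals 0 y -> 0 <= y.
Proof.
move=> [t [a [t0 []]]]; rewrite scaler0 => fin ->.
by apply: divr_ge0 (ltW t0); rewrite subr_ge0 -lee_fin fineK.
Qed.

Lemma hull_vals_addN_ge0 (p : X -> R) y z : is_dual p ->
  hull_vals p y -> hull_vals (- p) z -> 0 <= y + z.
Proof.
move=> hp [t [a [t0 [f1 ->]]]] [t' [a' [t'0 [f2 ->]]]].
have [w + wle] := hull_vals_add t0 t'0 hp (is_dualN hp) f1 f2.
by rewrite addrN => /hull_vals0_ge0; lra.
Qed.

Lemma hull_vals_bound (p : X -> R) (t : R) : is_dual p -> 0 < t ->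
  dnorm (t *: p) < r -> exists2 y, hull_vals p y & y <= (M - c) / t.
Proof.
move=> hp t0 ht; have hM := L_x0_le (is_dualZ t hp) ht.
have fin := fin_le (is_dualZ t hp) hM.
exists ((fine (L x0 (t *: p)) - c) / t); first by exists t, x0.
by rewrite ler_pM2r ?invr_gt0 // lerD2r -lee_fin fineK.
Qed.

Lemma hull_vals_ne (p : X -> R) : is_dual p -> hull_vals p !=set0.
Proof.
move=> hp; have d0 := dnorm_ge0 hp.
pose t := r / (dnorm p + 1).
have t0 : 0 < t by rewrite divr_gt0 // ltr_wpDl.
have ht : dnorm (t *: p) < r.
  apply: le_lt_trans (dnormZ hp (ltW t0)) _.
  by rewrite /t mulrAC ltr_pdivrMr ?ltr_wpDl // mulrDr mulr1 ltrDl.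
by have [y Sy _] := hull_vals_bound hp t0 ht; exists y.
Qed.

Lemma hull_le (p : X -> R) y : is_dual p -> hull_vals p y -> hull p <= y.
Proof.
move=> hp Sy; apply: ge_inf => //.
have [z Sz] := hull_vals_ne (is_dualN hp).
by exists (- z) => y' Sy'; have := hull_vals_addN_ge0 hp Sy' Sz; lra.
Qed.

Lemma hull_le_L (p : X -> R) a : is_dual p -> L a p \is a fin_num ->
  hull p <= fine (L a p) - c.
Proof.
by move=> hp fin; rewrite -[_ - c]divr1; apply: hull_le => //; exists 1, a; rewrite scale1r.
Qed.

Lemma hull_sublinear : sublinear (@is_dual R X) hull.
Proof.
split.
- move=> u v hu hv; apply: le_inf_add; try exact: hull_vals_ne.
  move=> _ _ [t [a [t0 [f1 ->]]]] [t' [a' [t'0 [f2 ->]]]].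
  have [w Sw wle] := hull_vals_add t0 t'0 hu hv f1 f2.
  by apply: le_trans wle; apply: hull_le Sw; exact: is_dualD.
- move=> a u a0 hu; have hau := is_dualZ a hu.
  apply/eqP; rewrite eq_le; apply/andP; split.
  + rewrite -ler_pdivrMl //; apply: lb_le_inf; first exact: hull_vals_ne.
    move=> _ [t [b [t0 [f1 ->]]]].
    rewrite ler_pdivrMl //; apply: hull_le => //.
    exists (t / a), b; rewrite scalerA mulfVK ?gt_eqF // divr_gt0 //.
    by split=> //; split=> //; field; rewrite !gt_eqF.
  + rewrite {2}/hull; apply: lb_le_inf; first exact: hull_vals_ne.
    move=> _ [t [b [t0 [+ ->]]]]; rewrite scalerA => f1.
    rewrite -ler_pdivlMl //; apply: hull_le => //.
    exists (t * a), b; rewrite mulr_gt0 //.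
    by split=> //; split=> //; field; rewrite !gt_eqF.
Qed.

Lemma c_le_M : c <= M.
Proof.
have := L_x0_le (@is_dual0 R X); rewrite dnorm0 => /(_ r_gt0).
by move/(le_trans (c_le x0)); rewrite lee_fin.
Qed.

(* The point (x0, t p) lies in the ball where L <= M: for every t > 0 if
   |p| = 0, and for t = r / (2 |p|) otherwise. *)
Lemma hull_le_dnorm (p : X -> R) : is_dual p -> hull p <= (2 * (M - c) / r) * dnorm p.
Proof.
move=> hp; have := dnorm_ge0 hp; rewrite le0r => /orP[/eqP d0|d0].
  rewrite d0 mulr0 leNgt; apply/negP => qp.
  pose t := (M - c + 1) / hull p.
  have t0 : 0 < t by rewrite divr_gt0 //; have := c_le_M; lra.
  have ht : dnorm (t *: p) < r.
    by apply: le_lt_trans (dnormZ hp (ltW t0)) _; rewrite d0 mulr0.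
  have [y Sy] := hull_vals_bound hp t0 ht.
  rewrite /t invf_div mulrA ler_pdivlMr; last by have := c_le_M; lra.
  by have := hull_le hp Sy; have := c_le_M; nra.
pose t := r / (2 * dnorm p).
have t0 : 0 < t by rewrite divr_gt0 // mulr_gt0.
have ht : dnorm (t *: p) < r.
  apply: le_lt_trans (dnormZ hp (ltW t0)) _.
  have -> : t * dnorm p = r / 2 by rewrite /t; field; rewrite gt_eqF.
  by rewrite ltr_pdivrMr // ltr_pMr // ltr1n.
have [y Sy yle] := hull_vals_bound hp t0 ht.
apply: le_trans (hull_le hp Sy) (le_trans yle _).
by rewrite le_eqVlt; apply/orP; left; apply/eqP; rewrite /t; field; rewrite !gt_eqF.
Qed.

Lemma dual_point_below_hull : reflexive_space X ->
  exists xbar : X, forall a p, is_dual p -> ((p xbar)%:E <= L a p - c%:E)%E.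
Proof.
move=> hrefl.
have d0 := @is_dual0 R X.
have [f [flin fq]] := hahn_banach d0 (@is_dual_comb R X) hull_sublinear.
pose K := 2 * (M - c) / r.
have K0 : 0 <= K.
  by apply: divr_ge0 (ltW r_gt0); apply: mulr_ge0 => //; rewrite subr_ge0 c_le_M.
have fK p : is_dual p -> f p <= K * dnorm p.
  by move=> hp; exact: le_trans (fq _ hp) (hull_le_dnorm hp).
have f0 : f 0 = 0 by have := flin 1 0 0 d0 d0; rewrite scale1r addr0; lra.
have fN p : is_dual p -> f (- p) = - f p.
  by move=> hp; have := flin (-1) p 0 hp d0; rewrite scaleN1r !addr0 f0; lra.
have [xbar fE] : exists xbar : X, forall p, is_dual p -> f p = p xbar.
  apply: hrefl; split; first exact: flin.
  exists K => p hp; rewrite ler_norml fK // andbT lerNl -fN //.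
  exact: le_trans (fK _ (is_dualN hp)) (ler_wpM2l K0 (dnormN hp)).
exists xbar => a p hp; case hL : (L a p) => [y| |]; last by have := Lnm a hp; rewrite hL.
- have := hull_le_L hp (a := a); rewrite hL => /(_ isT) /= h.
  by rewrite -fE // -EFinB lee_fin (le_trans (fq _ hp)).
- by rewrite leey.
Qed.

End PositiveHull.

Section Conjugate.
Variables (R : realType) (X : normedModType R) (L : X -> (X -> R) -> \bar R).
Hypothesis Lnm : no_minfty L.
Local Open Scope ereal_scope.

Lemma LF_ge (q p : X -> R) a y : is_dual p -> (q a + p y)%:E - L a p <= LF L q y.
Proof. by move=> hp; apply: ereal_sup_ubound; exists a => //; exists p. Qed.

Lemma LF0_le (c : R) y : (forall a p, is_dual p -> (p y)%:E <= L a p - c%:E) ->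
  LF L (fun _ => 0%R) y <= (- c)%:E.
Proof.
move=> hy; apply: ge_ereal_sup => _ [a _ [p hp <-]] /=; rewrite add0r.
move: (hy a p hp); case: (L a p) (Lnm a hp) => [z| |] //= _.
- by rewrite -!EFinB !lee_fin; lra.
- by rewrite leNye.
Qed.

Lemma antiselfdual_ge0 (Rop : X -> X) :
  (forall x, LF L (fun _ => 0%R) x = L (- Rop x)%R (fun _ => 0%R)) ->
  (forall b, exists x, Rop x = b) -> forall b, 0 <= L b (fun _ => 0%R).
Proof.
move=> hLF Rsurj b; have [x Rx] := Rsurj (- b)%R.
have : - L b (fun _ => 0%R) <= L b (fun _ => 0%R).
  have := LF_ge (fun _ => 0%R) b x (@is_dual0 R X).
  by rewrite add0r sub0e hLF Rx opprK.
by case: (L b _) (Lnm b (@is_dual0 R X)) => [z| |] //= _; rewrite !lee_fin; lra.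
Qed.

End Conjugate.

Unset Implicit Arguments.

Theorem proposition2p1 (R : realType) (X : completeNormedModType R)
  (Rop : X -> X) (L : X -> (X -> R) -> \bar R) :
  reflexive_space X -> lin_iso Rop ->
  no_minfty L -> proper_fun L -> convex_fun L -> lsc_fun L ->
  (forall x : X, LF L (fun _ => 0) x = L (- Rop x) (fun _ => 0)) ->
  (exists x0 : X, exists2 r : R, 0 < r & exists M : R,
     forall p, is_dual p -> dnorm p < r -> (L x0 p <= M%:E)%E) ->
  exists xbar : X,
    L (- Rop xbar) (fun _ => 0) = 0%E /\
    ereal_inf (range (fun x => L x (fun _ => 0))) = 0%E /\
    subdiff L (- Rop xbar) (fun _ => 0) (fun _ => 0) xbar.
Proof.
move=> hrefl [_ [_ [S [_ [_ SK]]]]] Lnm _ Lconv _ hLF [x0 [r r0 [M Mb]]].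
have L0_ge0 := antiselfdual_ge0 Lnm hLF (fun b => ex_intro _ (S b) (SK b)).
set m := ereal_inf _.
have m_ge0 : (0 <= m)%E by apply: le_ereal_inf_tmp => _ [b _ <-].
have m_fin : m \is a fin_num.
  rewrite ge0_fin_numE // (le_lt_trans _ (ltry M)) //.
  apply: le_trans (Mb _ (@is_dual0 R X) _); last by rewrite dnorm0.
  by apply: ereal_inf_lbound; exists x0.
have c_le a : ((fine m)%:E <= L a (0 : X -> R)%R)%E.
  by rewrite fineK //; apply: ereal_inf_lbound; exists a.
have [xbar hx] := dual_point_below_hull Lnm Lconv c_le r0 Mb hrefl.
have := LF0_le Lnm hx; rewrite hLF => LFle.
have m0 : m = 0%E.
  apply/eqP; rewrite eq_le m_ge0 andbT -(fineK m_fin) lee_fin.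
  by have := le_trans (L0_ge0 _) LFle; rewrite lee_fin oppr_ge0.
rewrite m0 /= oppr0 in hx LFle.
have Lz : L (- Rop xbar) (fun _ => 0) = 0%E.
  by apply/eqP; rewrite eq_le LFle L0_ge0.
exists xbar; split=> //; split=> //.
split; first by rewrite Lz.
by move=> b p hp; rewrite Lz add0e /= add0r subr0; have := hx b p hp; rewrite adde0.
Qed.
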